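(* Let $\mathcal{H}$ be a complex Hilbert space and let $A\in\mathcal{B}(\mathcal{H})$ be nonzero. Then \[ \|A\|\left(1-\frac12\left\|I-\frac{A}{\|A\|}\right\|^2\right)\le \omega(A). \]
   Context: $\mathcal{B}(\mathcal{H})$ denotes the algebra of bounded linear operators on $\mathcal{H}$, $I$ the identity operator; $\omega(A)=\sup_{\|x\|=1}|\langle Ax,x\rangle|$ is the numerical radius and $\|\cdot\|$ the operator norm. *)

From mathcomp Require Import all_boot all_order all_algebra.
From mathcomp Require Import complex.
From mathcomp Require Import classical_sets reals.
Set Implicit Arguments. Unset Strict Implicit. Unset Printing Implicit Defensive.
Import Order.TTheory GRing.Theory Num.Theory.
Local Open Scope ring_scope.
Local Open Scope complex_scope.
Local Open Scope classical_set_scope.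

Section Hilbert.
Variables (R : realType) (V : lmodType R[i]) (inner : V -> V -> R[i]).

Definition is_inner_product : Prop :=
  [/\ (forall (a : R[i]) (x y z : V), inner (a *: x + y) z = a * inner x z + inner y z),
      (forall x y : V, inner y x = (inner x y)^*),
      (forall x : V, 0 <= inner x x) &
      (forall x : V, inner x x = 0 -> x = 0)].

Definition ipnorm (x : V) : R := Num.sqrt (complex.Re (inner x x)).

Definition cmod (z : R[i]) : R := Num.sqrt (complex.Re z ^+ 2 + complex.Im z ^+ 2).

Definition ip_complete : Prop :=
  forall u : nat -> V,
    (forall e : R, 0 < e -> exists N : nat, forall m n : nat,
        (N <= m)%N -> (N <= n)%N -> ipnorm (u m - u n) < e) ->
    exists l : V, forall e : R, 0 < e -> exists N : nat, forall n : nat,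
        (N <= n)%N -> ipnorm (u n - l) < e.

Definition is_linear_op (T : V -> V) : Prop :=
  forall (a : R[i]) (x y : V), T (a *: x + y) = a *: T x + T y.

Definition is_bounded_op (T : V -> V) : Prop :=
  exists M : R, forall x : V, ipnorm (T x) <= M * ipnorm x.

Definition opnorm (T : V -> V) : R :=
  sup [set r : R | exists x : V, ipnorm x = 1 /\ r = ipnorm (T x)].

Definition numrad (T : V -> V) : R :=
  sup [set r : R | exists x : V, ipnorm x = 1 /\ r = cmod (inner (T x) x)].

End Hilbert.

(** For a unit vector x and a := ||A||, expanding the square of the norm of
    (I - A/a) x gives
      ||A x||^2 = a^2 ||(I - A/a) x||^2 - a^2 + 2 a Re<A x, x>
               <= a^2 ||I - A/a||^2 - a^2 + 2 a w(A).
    Taking the supremum over x turns the left-hand side into a^2, and dividing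
    by 2a yields the inequality. *)

From mathcomp Require Import all_boot all_order all_algebra.
From mathcomp Require Import complex.
From mathcomp Require Import classical_sets reals.
From mathcomp Require Import ring lra.
Set Implicit Arguments. Unset Strict Implicit. Unset Printing Implicit Defensive.
Import Order.TTheory GRing.Theory Num.Theory.
Local Open Scope ring_scope.
Local Open Scope complex_scope.

Section ComplexParts.
Variable R : realType.
Implicit Types u v : R[i].

Lemma ReD u v : complex.Re (u + v) = complex.Re u + complex.Re v.
Proof. by case: u v => [? ?] [? ?]. Qed.

Lemma ReN u : complex.Re (- u) = - complex.Re u.
Proof. by case: u. Qed.

Lemma ReJ u : complex.Re u^* = complex.Re u.
Proof. by case: u. Qed.

Lemma Re_realM (c : R) u : complex.Re (c%:C * u) = c * complex.Re u.
Proof. by case: u => a b /=; ring. Qed.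

Lemma Re_mulNi u : complex.Re (- 'i * u) = complex.Im u.
Proof. by case: u => a b /=; ring. Qed.

Lemma Re_le_cmod u : complex.Re u <= cmod u.
Proof.
rewrite /cmod (le_trans (ler_norm _)) // -sqrtr_sqr ler_wsqrtr //.
by rewrite lerDl sqr_ge0.
Qed.

Lemma cmod_le_normRe_normIm u : cmod u <= `|complex.Re u| + `|complex.Im u|.
Proof.
rewrite /cmod -[leRHS]ger0_norm ?addr_ge0 // -sqrtr_sqr ler_wsqrtr //.
rewrite sqrrD !real_normK ?num_real // -addrA lerD2l lerDr.
by rewrite mulrn_wge0 // mulr_ge0.
Qed.

End ComplexParts.

Section InnerProduct.
Variables (R : realType) (V : lmodType R[i]) (inner : V -> V -> R[i]).
Hypothesis Hip : is_inner_product inner.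

Local Notation nsq x := (complex.Re (inner x x)).
Local Notation nrm := (ipnorm inner).

Lemma innerDl x y z : inner (x + y) z = inner x z + inner y z.
Proof. by case: Hip => lin _ _ _; rewrite -[x in LHS]scale1r lin mul1r. Qed.

Lemma inner0l z : inner 0 z = 0.
Proof.
by case: Hip => lin _ _ _; have := lin (-1) 0 0 z; rewrite scaler0 addr0 mulN1r addNr.
Qed.

Lemma innerZl a x z : inner (a *: x) z = a * inner x z.
Proof. by case: Hip => lin _ _ _; rewrite -[_ *: x]addr0 lin inner0l addr0. Qed.

Lemma innerNl x z : inner (- x) z = - inner x z.
Proof. by rewrite -scaleN1r innerZl mulN1r. Qed.

Lemma innerC x y : inner y x = (inner x y)^*.
Proof. by case: Hip. Qed.

Lemma innerDr x y z : inner z (x + y) = inner z x + inner z y.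
Proof. by rewrite innerC innerDl rmorphD /= -!innerC. Qed.

Lemma innerNr x z : inner z (- x) = - inner z x.
Proof. by rewrite innerC innerNl rmorphN /= -innerC. Qed.

Lemma Re_innerC x y : complex.Re (inner y x) = complex.Re (inner x y).
Proof. by rewrite innerC ReJ. Qed.

Lemma inner_self_ge0 x : 0 <= inner x x.
Proof. by case: Hip. Qed.

Lemma nsq_ge0 x : 0 <= nsq x.
Proof. by have := inner_self_ge0 x; rewrite lecE => /andP[]. Qed.

Lemma Im_inner_self x : complex.Im (inner x x) = 0.
Proof. by have := inner_self_ge0 x; rewrite lecE => /andP[/eqP]. Qed.

Lemma nsq_eq0 x : nsq x = 0 -> x = 0.
Proof.
case: Hip => _ _ _ definite nsq0; apply: definite.
by move: nsq0 (Im_inner_self x); case: (inner x x) => a b /= -> ->.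
Qed.

Lemma nsqD x y : nsq (x + y) = nsq x + 2 * complex.Re (inner y x) + nsq y.
Proof. by rewrite innerDl !innerDr !ReD (Re_innerC y x); ring. Qed.

Lemma nsqB x y : nsq (x - y) = nsq x - 2 * complex.Re (inner y x) + nsq y.
Proof.
by rewrite innerDl innerNl !innerDr !innerNr !ReD !ReN (Re_innerC y x); ring.
Qed.

Lemma nsqZ (c : R) x : nsq (c%:C *: x) = c ^+ 2 * nsq x.
Proof. by rewrite innerZl Re_realM innerC innerZl ReJ Re_realM mulrA. Qed.

Lemma nsqZNi x : nsq (- 'i *: x) = nsq x.
Proof.
rewrite innerZl innerC innerZl.
by move: (Im_inner_self x); case: (inner x x) => a b /= ->; ring.
Qed.

Lemma parallelogram x y : nsq (x + y) + nsq (x - y) = 2 * nsq x + 2 * nsq y.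
Proof. by rewrite nsqD nsqB; ring. Qed.

Lemma nsqB_le x y : nsq (x - y) <= 2 * nsq x + 2 * nsq y.
Proof. by rewrite -parallelogram lerDr nsq_ge0. Qed.

Lemma normRe_inner_le y x : `|complex.Re (inner y x)| <= (nsq x + nsq y) / 2.
Proof.
have := nsq_ge0 (x + y); have := nsq_ge0 (x - y); rewrite nsqB nsqD.
by case: (lerP 0 (complex.Re (inner y x))) => [/ger0_norm|/ltr0_norm] ->; lra.
Qed.

(* Rotating [y] by [-i] turns the imaginary part into a real part. *)
Lemma normIm_inner_le y x : `|complex.Im (inner y x)| <= (nsq x + nsq y) / 2.
Proof. by rewrite -Re_mulNi -innerZl -[nsq y](nsqZNi y) normRe_inner_le. Qed.

Lemma cmod_inner_le y x : cmod (inner y x) <= nsq x + nsq y.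
Proof.
apply: le_trans (cmod_le_normRe_normIm _) _.
by have := normRe_inner_le y x; have := normIm_inner_le y x; lra.
Qed.

Lemma ipnorm_ge0 x : 0 <= nrm x.
Proof. exact: sqrtr_ge0. Qed.

Lemma sqr_ipnorm x : nrm x ^+ 2 = nsq x.
Proof. by rewrite sqr_sqrtr // nsq_ge0. Qed.

Lemma ipnorm_gt0 x : x != 0 -> 0 < nrm x.
Proof.
move=> x0; rewrite sqrtr_gt0 lt_def nsq_ge0 andbT.
by apply: contraNneq x0 => /nsq_eq0 ->.
Qed.

Lemma ipnormZ (c : R) x : nrm (c%:C *: x) = `|c| * nrm x.
Proof. by rewrite /ipnorm nsqZ sqrtrM ?sqr_ge0 // sqrtr_sqr. Qed.

Lemma ipnorm_normalize x : x != 0 -> nrm (((nrm x)^-1)%:C *: x) = 1.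
Proof.
move=> x0; have x_gt0 := ipnorm_gt0 x0.
by rewrite ipnormZ ger0_norm ?invr_ge0 ?ltW // mulVf ?gt_eqF.
Qed.

Lemma sqr_ipnorm_subZV (c : R) x y : c != 0 ->
  c ^+ 2 * nrm (x - (c^-1)%:C *: y) ^+ 2
    = c ^+ 2 * nrm x ^+ 2 - 2 * c * complex.Re (inner y x) + nrm y ^+ 2.
Proof.
move=> c0; rewrite !sqr_ipnorm nsqB nsqZ innerZl Re_realM.
by field.
Qed.

End InnerProduct.

Section Operators.
Variables (R : realType) (V : lmodType R[i]) (inner : V -> V -> R[i]).
Hypothesis Hip : is_inner_product inner.

Local Notation nrm := (ipnorm inner).
Local Notation nsq x := (complex.Re (inner x x)).
Implicit Types (T : V -> V) (x : V).

Lemma linear_op0 T : is_linear_op T -> T 0 = 0.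
Proof.
by move=> lin; have := lin (-1) 0 0; rewrite scaler0 addr0 scaleN1r addNr.
Qed.

Lemma linear_opZ T : is_linear_op T -> forall a x, T (a *: x) = a *: T x.
Proof. by move=> lin a x; rewrite -[a *: x]addr0 lin linear_op0 // addr0. Qed.

Lemma exists_unit_nonzero_image T : is_linear_op T -> (exists x, T x != 0) ->
  exists2 u, nrm u = 1 & T u != 0.
Proof.
move=> lin [x Tx0].
have x0 : x != 0 by apply: contraNneq Tx0 => ->; rewrite linear_op0.
exists (((nrm x)^-1)%:C *: x); first exact: ipnorm_normalize.
rewrite linear_opZ // scaler_eq0 negb_or Tx0 andbT eq_complex /= negb_and.
by rewrite invr_eq0 gt_eqF // ipnorm_gt0.
Qed.

Lemma bounded_op_unit T : is_bounded_op inner T ->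
  exists M, forall x, nrm x = 1 -> nrm (T x) <= M.
Proof. by case=> M bdd; exists M => x x1; rewrite -[M]mulr1 -x1 bdd. Qed.

Lemma ipnorm_le_opnorm T x : is_bounded_op inner T -> nrm x = 1 ->
  nrm (T x) <= opnorm inner T.
Proof.
case/bounded_op_unit=> M bdd x1; apply: ub_le_sup; last by exists x.
by exists M => _ [y [y1 ->]]; exact: bdd.
Qed.

Lemma opnorm_ge0 T : is_bounded_op inner T -> (exists x, nrm x = 1) ->
  0 <= opnorm inner T.
Proof.
move=> bdd [x x1].
by apply: le_trans (ipnorm_le_opnorm bdd x1); exact: ipnorm_ge0.
Qed.

Lemma sqr_opnorm_le T K : is_bounded_op inner T -> (exists x, nrm x = 1) ->
  (forall x, nrm x = 1 -> nrm (T x) ^+ 2 <= K) -> opnorm inner T ^+ 2 <= K.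
Proof.
move=> bdd [u u1] le_K.
have K0 : 0 <= K by apply: le_trans (le_K u u1); exact: sqr_ge0.
rewrite -(sqr_sqrtr K0) ler_sqr ?nnegrE ?sqrtr_ge0 ?opnorm_ge0 //; last by exists u.
apply: ge_sup; first by exists (nrm (T u)), u.
move=> _ [x [x1 ->]]; rewrite -(ler_sqr (ipnorm_ge0 _ _)) ?nnegrE ?sqrtr_ge0 //.
by rewrite (sqr_sqrtr K0); apply: le_K.
Qed.

Lemma cmod_le_numrad T x : is_bounded_op inner T -> nrm x = 1 ->
  cmod (inner (T x) x) <= numrad inner T.
Proof.
case/bounded_op_unit=> M bdd x1; apply: ub_le_sup; last by exists x.
exists (1 + M ^+ 2) => _ [y [y1 ->]].
apply: le_trans (cmod_inner_le Hip _ _) _.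
rewrite -!sqr_ipnorm // y1 expr1n lerD2l ler_sqr ?nnegrE ?ipnorm_ge0 ?bdd //.
exact: le_trans (ipnorm_ge0 _ _) (bdd y y1).
Qed.

Lemma is_bounded_op_subZ T (c : R) : is_bounded_op inner T ->
  is_bounded_op inner (fun x => x - c%:C *: T x).
Proof.
case=> M bdd; set k := 2 + 2 * (c ^+ 2 * M ^+ 2).
have k0 : 0 <= k by rewrite /k addr_ge0 // mulr_ge0 // mulr_ge0 // sqr_ge0.
exists (Num.sqrt k) => x.
have Mx0 : 0 <= M * nrm x by apply: le_trans (bdd x); exact: ipnorm_ge0.
have TxM : nsq (T x) <= M ^+ 2 * nsq x.
  by rewrite -!sqr_ipnorm // -exprMn ler_sqr ?nnegrE ?ipnorm_ge0 ?bdd.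
rewrite -(ler_sqr (ipnorm_ge0 _ _)) ?nnegrE ?mulr_ge0 ?sqrtr_ge0 ?ipnorm_ge0 //.
rewrite exprMn (sqr_sqrtr k0) !sqr_ipnorm //.
apply: le_trans (nsqB_le Hip _ _) _; rewrite nsqZ //.
by have := sqr_ge0 c; have := nsq_ge0 Hip x; rewrite /k; nra.
Qed.

Lemma sqr_ipnorm_op_le T (c : R) : is_bounded_op inner T -> 0 < c ->
  forall x, nrm x = 1 ->
  nrm (T x) ^+ 2 <= c ^+ 2 * opnorm inner (fun y => y - (c^-1)%:C *: T y) ^+ 2
                    - c ^+ 2 + 2 * c * numrad inner T.
Proof.
move=> bdd c_gt0 x x1; set S := fun y => y - (c^-1)%:C *: T y.
have := sqr_ipnorm_subZV Hip x (T x) (lt0r_neq0 c_gt0).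
rewrite x1 expr1n mulr1 -/(S x) => expand.
have Sx_le : nrm (S x) ^+ 2 <= opnorm inner S ^+ 2.
  have Sx0 := ipnorm_ge0 inner (S x).
  have Sx_opnorm := ipnorm_le_opnorm (is_bounded_op_subZ c^-1 bdd) x1.
  by rewrite !expr2; apply: ler_pM.
have Re_le : complex.Re (inner (T x) x) <= numrad inner T.
  exact: le_trans (Re_le_cmod _) (cmod_le_numrad bdd x1).
have := ler_wpM2l (ltW c_gt0) Re_le; have := ler_wpM2l (sqr_ge0 c) Sx_le; lra.
Qed.

End Operators.

Theorem theorem3p1 (R : realType) (V : lmodType R[i]) (inner : V -> V -> R[i])
  (Hip : is_inner_product inner) (Hcomplete : ip_complete inner)
  (A : V -> V) (HAlin : is_linear_op A) (HAbd : is_bounded_op inner A)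
  (HA0 : exists x : V, A x != 0) :
  opnorm inner A *
    (1 - 2^-1 * opnorm inner (fun x => x - ((opnorm inner A)^-1)%:C *: A x) ^+ 2)
  <= numrad inner A.
Proof.
set a := opnorm inner A; set b := opnorm inner _; set w := numrad inner A.
have [u u1 Au0] := exists_unit_nonzero_image Hip HAlin HA0.
have a_gt0 : 0 < a.
  exact: lt_le_trans (ipnorm_gt0 Hip Au0) (ipnorm_le_opnorm HAbd u1).
have := sqr_opnorm_le HAbd (ex_intro _ u u1) (sqr_ipnorm_op_le Hip HAbd a_gt0).
rewrite -/a -/b -/w -subr_ge0 => gap_ge0.
rewrite -subr_ge0 -(pmulr_rge0 _ a_gt0).
suff -> : a * (w - a * (1 - 2^-1 * b ^+ 2))
    = 2^-1 * (a ^+ 2 * b ^+ 2 - a ^+ 2 + 2 * a * w - a ^+ 2).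
  by rewrite mulr_ge0 ?invr_ge0.
by field.
Qed.
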